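(* Let $\lambda_1,\dots,\lambda_8$ be the Gell-Mann matrices (traceless Hermitian $3\times3$ matrices forming a basis of $i\,\mathfrak{su}_3$ with $\operatorname{Tr}(\lambda_a\lambda_b)=2\delta_{ab}$), and for $v\in\mathbb R^8$ write $v\lambda=\sum_av_a\lambda_a$. Then $\frac13(\mathbf 1+v\lambda)$ is a density matrix if and only if $$|v|^2\le\min\big(3,\ 1+\det(v\lambda)\big).$$
   Context: A density matrix is a positive semidefinite Hermitian matrix of trace 1. *)

From HB Require Import structures.
From mathcomp Require Import all_boot all_order all_algebra.
From mathcomp Require Import reals.
From mathcomp Require Import complex.
Set Implicit Arguments. Unset Strict Implicit. Unset Printing Implicit Defensive.
Import Order.TTheory GRing.Theory Num.Theory.
Local Open Scope ring_scope.

Section GellMann.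
Variable R : realType.
Local Notation C := (complex R).

Definition rC (x : R) : C := Complex x 0.
Definition iC : C := Complex 0 1.

Definition adjmx (m n : nat) (A : 'M[C]_(m, n)) : 'M[C]_(n, m) :=
  \matrix_(i, j) conjc (A j i).

Definition hermitian (n : nat) (A : 'M[C]_n) : Prop := adjmx A = A.

Definition psd (n : nat) (A : 'M[C]_n) : Prop :=
  hermitian A /\ forall x : 'cV[C]_n, 0 <= (adjmx x *m A *m x) 0 0.

Definition density_matrix (n : nat) (A : 'M[C]_n) : Prop :=
  psd A /\ \tr A = 1.

Definition mx3 (a b c d e f g h k : C) : 'M[C]_3 :=
  \matrix_(i < 3, j < 3)
    match nat_of_ord i, nat_of_ord j with
    | 0, 0 => a | 0, 1 => b | 0, _ => c
    | 1, 0 => d | 1, 1 => e | 1, _ => f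
    | _, 0 => g | _, 1 => h | _, _ => k
    end.

(* The standard Gell-Mann matrices lambda_1, ..., lambda_8 (indexed 0..7). *)
Definition gell_mann (a : 'I_8) : 'M[C]_3 :=
  match nat_of_ord a with
  | 0 => mx3 0 1 0  1 0 0  0 0 0
  | 1 => mx3 0 (- iC) 0  iC 0 0  0 0 0
  | 2 => mx3 1 0 0  0 (-1) 0  0 0 0
  | 3 => mx3 0 0 1  0 0 0  1 0 0
  | 4 => mx3 0 0 (- iC)  0 0 0  iC 0 0
  | 5 => mx3 0 0 0  0 0 1  0 1 0
  | 6 => mx3 0 0 0  0 0 (- iC)  0 iC 0
  | _ => rC (Num.sqrt 3)^-1 *: mx3 1 0 0  0 1 0  0 0 (-2)
  end.

Definition vlambda (v : 'rV[R]_8) : 'M[C]_3 :=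
  \sum_(a < 8) rC (v 0 a) *: gell_mann a.

Definition sqnorm (v : 'rV[R]_8) : R := \sum_(a < 8) v 0 a ^+ 2.

End GellMann.

From Pilot Require Import Defs.
From HB Require Import structures.
From mathcomp Require Import all_boot all_order all_algebra.
From mathcomp Require Import reals complex sesquilinear spectral ring lra.
Import Order.TTheory GRing.Theory Num.Theory.
Local Open Scope ring_scope.
Set Implicit Arguments. Unset Strict Implicit. Unset Printing Implicit Defensive.

(* The matrix v lambda is Hermitian and traceless with Tr((v lambda)^2) = 2|v|^2,
   so it is unitarily similar to a real diagonal matrix diag(d1, d2, d3) with
   d1 + d2 + d3 = 0 and d1^2 + d2^2 + d3^2 = 2|v|^2, and (1 + v lambda)/3 is a
   density matrix exactly when the numbers 1 + d_i are nonnegative.  Their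
   elementary symmetric functions are 3, 3 - |v|^2 and 1 - |v|^2 + d1 d2 d3, with
   d1 d2 d3 = det(v lambda), and three reals are nonnegative iff their elementary
   symmetric functions are. *)

Lemma ord3_cases (i : 'I_3) : [\/ i = inord 0, i = inord 1 | i = inord 2].
Proof.
by case: i => [[|[|[|//]]] ?]; [apply: Or31 | apply: Or32 | apply: Or33];
  apply/val_inj; rewrite /= inordK.
Qed.

Lemma forall_ord3 (P : 'I_3 -> Prop) :
  (forall i, P i) <-> [/\ P (inord 0), P (inord 1) & P (inord 2)].
Proof. by split=> [P_all|[P0 P1 P2] i]; [split | case: (ord3_cases i) => ->]. Qed.

Lemma big_ord3 (T : Type) (idx : T) (op : Monoid.law idx) (F : 'I_3 -> T) :
  \big[op/idx]_i F i = op (op (F (inord 0)) (F (inord 1))) (F (inord 2)).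
Proof.
rewrite !big_ord_recr big_ord0 /= Monoid.mul1m.
by congr (op (op (F _) (F _)) (F _)); apply/val_inj; rewrite /= inordK.
Qed.

Section ElementarySymmetric3.
Variable R : realFieldType.

Lemma esym3_ge0 (x y z : R) :
  0 <= x + y + z -> 0 <= x * y + y * z + z * x -> 0 <= x * y * z -> 0 <= x.
Proof.
move=> e1 e2 e3; rewrite leNgt; apply/negP => x_lt0.
(* then y z <= 0, so x (y + z) >= - y z >= 0 gives y + z <= 0 < - x *)
have yz_le0 : y * z <= 0 by nra.
nra.
Qed.

Lemma ge0_iff_esym3_ge0 (x y z : R) :
  [/\ 0 <= x, 0 <= y & 0 <= z] <->
  [/\ 0 <= x + y + z, 0 <= x * y + y * z + z * x & 0 <= x * y * z].
Proof.
split=> [[x0 y0 z0]|[e1 e2 e3]]; first by split; rewrite ?addr_ge0 ?mulr_ge0.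
split; [exact: esym3_ge0 e1 e2 e3
       | apply: (@esym3_ge0 y z x) | apply: (@esym3_ge0 z x y)]; nra.
Qed.

Lemma traceless_shift_ge0 (d0 d1 d2 s : R) :
  d0 + d1 + d2 = 0 -> d0 ^+ 2 + d1 ^+ 2 + d2 ^+ 2 = 2 * s ->
  [/\ 0 <= 1 + d0, 0 <= 1 + d1 & 0 <= 1 + d2] <-> s <= 3 /\ s <= 1 + d0 * d1 * d2.
Proof.
move=> sum0 sumsq; rewrite ge0_iff_esym3_ge0.
have sE : s = (d0 ^+ 2 + d1 ^+ 2 + d2 ^+ 2) / 2 by rewrite sumsq; field.
have d2E : d2 = - d0 - d1 by lra.
have -> : (1 + d0) * (1 + d1) + (1 + d1) * (1 + d2) + (1 + d2) * (1 + d0) = 3 - s.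
  by rewrite sE d2E; field.
have -> : (1 + d0) * (1 + d1) * (1 + d2) = 1 - s + d0 * d1 * d2.
  by rewrite sE d2E; field.
split=> [[_ e2 e3]|[s_le3 s_le]]; split; lra.
Qed.

Lemma traceless3_shift_ge0 (d : 'rV[R]_3) (s : R) :
  \sum_i d 0 i = 0 -> \sum_i d 0 i ^+ 2 = 2 * s ->
  (forall i, 0 <= 1 + d 0 i) <-> s <= 3 /\ s <= 1 + \prod_i d 0 i.
Proof.
rewrite !big_ord3 => sum0 sumsq; apply: iff_trans (forall_ord3 _) _.
exact: traceless_shift_ge0.
Qed.

End ElementarySymmetric3.

Section ComplexParts.
Variable R : fieldType.
Implicit Types x y : R[i].
Local Notation Re := (@complex.Re R).
Local Notation Im := (@complex.Im R).

Lemma complex_eq x y : Re x = Re y -> Im x = Im y -> x = y.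
Proof. by case: x; case: y => a b c d /= -> ->. Qed.

Lemma ReD x y : Re (x + y) = Re x + Re y. Proof. by case: x; case: y. Qed.
Lemma ImD x y : Im (x + y) = Im x + Im y. Proof. by case: x; case: y. Qed.
Lemma ReN x : Re (- x) = - Re x. Proof. by case: x. Qed.
Lemma ImN x : Im (- x) = - Im x. Proof. by case: x. Qed.
Lemma ReM x y : Re (x * y) = Re x * Re y - Im x * Im y. Proof. by case: x; case: y. Qed.
Lemma ImM x y : Im (x * y) = Re x * Im y + Im x * Re y. Proof. by case: x; case: y. Qed.
Lemma Re_conj x : Re (conjc x) = Re x. Proof. by case: x. Qed.
Lemma Im_conj x : Im (conjc x) = - Im x. Proof. by case: x. Qed.
Lemma Re_Complex (a b : R) : Re (Complex a b) = a. Proof. by []. Qed.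
Lemma Im_Complex (a b : R) : Im (Complex a b) = b. Proof. by []. Qed.
Lemma Re0 : Re (0 : R[i]) = 0. Proof. by []. Qed.
Lemma Im0 : Im (0 : R[i]) = 0. Proof. by []. Qed.
Lemma Re1 : Re (1 : R[i]) = 1. Proof. by []. Qed.
Lemma Im1 : Im (1 : R[i]) = 0. Proof. by []. Qed.

Definition complex_partsE := (ReD, ImD, ReN, ImN, ReM, ImM, Re_conj, Im_conj,
  Re_Complex, Im_Complex, Re0, Im0, Re1, Im1).

End ComplexParts.

Section UnitaryDiagonal.
Variable R : realType.
Local Notation C := (complex R).

Lemma rCE (x : R) : rC x = real_complex R x. Proof. by []. Qed.

Lemma rC_inj : injective (@rC R). Proof. exact: complexI. Qed.

Lemma adjmxE m n (A : 'M[C]_(m, n)) : adjmx A = map_mx Num.conj A^T.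
Proof. by apply/matrixP=> i j; rewrite !mxE. Qed.

Lemma adjmxK m n (A : 'M[C]_(m, n)) : adjmx (adjmx A) = A.
Proof. by apply/matrixP=> i j; rewrite !mxE conjcK. Qed.

Lemma adjmxM m n p (A : 'M[C]_(m, n)) (B : 'M[C]_(n, p)) :
  adjmx (A *m B) = adjmx B *m adjmx A.
Proof. by rewrite !adjmxE trmx_mul map_mxM. Qed.

Definition rdiag_mx n (d : 'rV[R]_n) : 'M[C]_n := diag_mx (map_mx (@rC R) d).

Lemma adjmx_rdiag n (d : 'rV[R]_n) : adjmx (rdiag_mx d) = rdiag_mx d.
Proof.
apply/matrixP=> i j; rewrite !mxE eq_sym; case: eqP => [->|_].
  by rewrite !mulr1n /rC /= oppr0.
by rewrite !mulr0n conjc0.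
Qed.

Lemma real_rC (z : C) : z \is Num.real -> z = rC (complex.Re z).
Proof.
by rewrite CrealE; case: z => a b /eqP [] nb; have -> : b = 0 by lra.
Qed.

Lemma hermitian_unitary_rdiag n (A : 'M[C]_n) : adjmx A = A ->
  exists2 P : 'M[C]_n, adjmx P *m P = 1%:M &
    exists d : 'rV[R]_n, A = adjmx P *m rdiag_mx d *m P.
Proof.
move=> hA; have A_herm : A \is hermsymmx.
  by apply/is_hermitianmxP; rewrite expr0 scale1r {1}(esym hA) adjmxE.
have /orthomx_spectralP A_eq := hermitian_normalmx A_herm.
have P_unitary := spectral_unitarymx A.
exists (spectralmx A); first by rewrite adjmxE -invmx_unitary // mulVmx ?spectral_unit.
exists (map_mx (@complex.Re R) (spectral_diag A)).
rewrite /rdiag_mx.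
have -> : map_mx (@rC R) (map_mx (@complex.Re R) (spectral_diag A)) = spectral_diag A.
  apply/matrixP=> i j; rewrite !mxE -real_rC //.
  exact: mxOverP (hermitian_spectral_diag_real A_herm) i j.
by rewrite adjmxE -invmx_unitary.
Qed.

Lemma mxtrace_rdiag n (d : 'rV[R]_n) : \tr (rdiag_mx d) = rC (\sum_i d 0 i).
Proof. by rewrite mxtrace_diag rCE rmorph_sum; apply: eq_bigr => i _; rewrite mxE. Qed.

Lemma mxtrace_rdiag_sqr n (d : 'rV[R]_n) :
  \tr (rdiag_mx d *m rdiag_mx d) = rC (\sum_i d 0 i ^+ 2).
Proof.
rewrite mulmx_diag mxtrace_diag rCE rmorph_sum.
by apply: eq_bigr => i _; rewrite !mxE rmorphXn.
Qed.

Lemma det_rdiag n (d : 'rV[R]_n) : \det (rdiag_mx d) = rC (\prod_i d 0 i).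
Proof. by rewrite det_diag rCE rmorph_prod; apply: eq_bigr => i _; rewrite mxE. Qed.

Section UnitaryConjugation.
Variables (n : nat) (P : 'M[C]_n).
Hypothesis P_unitary : adjmx P *m P = 1%:M.

Lemma unitary_mulmx_adj : P *m adjmx P = 1%:M.
Proof. exact: mulmx1C. Qed.

Lemma mxtrace_unitary_conj (A : 'M[C]_n) : \tr (adjmx P *m A *m P) = \tr A.
Proof. by rewrite mxtrace_mulC mulmxA unitary_mulmx_adj mul1mx. Qed.

Lemma det_unitary_conj (A : 'M[C]_n) : \det (adjmx P *m A *m P) = \det A.
Proof. by rewrite !det_mulmx mulrAC -det_mulmx P_unitary det1 mul1r. Qed.

Lemma mulmx_unitary_conj (A B : 'M[C]_n) :
  (adjmx P *m A *m P) *m (adjmx P *m B *m P) = adjmx P *m (A *m B) *m P.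
Proof. by rewrite -!mulmxA (mulmxA P) unitary_mulmx_adj mul1mx. Qed.

Lemma quad_unitary_rdiag (d : 'rV[R]_n) (x : 'cV[C]_n) :
  (adjmx x *m (adjmx P *m rdiag_mx d *m P) *m x) 0 0 =
  \sum_i rC (d 0 i) * ((P *m x) i 0)^* * (P *m x) i 0.
Proof.
rewrite !mulmxA -adjmxM -mulmxA mul_mx_diag !mxE.
by apply: eq_bigr => i _; rewrite !mxE [_ * rC _]mulrC.
Qed.

Lemma psd_unitary_rdiag (d : 'rV[R]_n) :
  psd (adjmx P *m rdiag_mx d *m P) <-> forall i, 0 <= d 0 i.
Proof.
split=> [[_ d_psd] k|d_ge0].
  have := d_psd (adjmx P *m delta_mx k 0).
  rewrite quad_unitary_rdiag mulmxA unitary_mulmx_adj mul1mx (bigD1 k) //= big1.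
    by rewrite !mxE !eqxx /= conjC1 !mulr1 addr0 rCE ler0c.
  by move=> i /negbTE ik; rewrite !mxE ik mulr0.
split.
  by rewrite /Defs.hermitian !adjmxM adjmxK adjmx_rdiag mulmxA.
move=> x; rewrite quad_unitary_rdiag; apply: sumr_ge0 => i _.
by rewrite -mulrA mulr_ge0 ?rCE ?ler0c // mulrC mul_conjC_ge0.
Qed.

Lemma rdiag_shift (c : R) (d : 'rV[R]_n) :
  rdiag_mx (\row_i (c * (1 + d 0 i))) = rC c *: (1%:M + rdiag_mx d).
Proof.
apply/matrixP=> i j; rewrite !mxE; case: eqP => [->|_].
  by rewrite !mulr1n !rCE rmorphM rmorphD.
by rewrite !mulr0n addr0 mulr0.
Qed.

Lemma density_unitary_shift (d : 'rV[R]_n) : (0 < n)%N -> \sum_i d 0 i = 0 ->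
  density_matrix (rC (n%:R^-1) *: (1%:M + adjmx P *m rdiag_mx d *m P))
  <-> forall i, 0 <= 1 + d 0 i.
Proof.
move=> n_gt0 sum_d; set c : R := n%:R^-1.
have c_gt0 : 0 < c by rewrite invr_gt0 ltr0n.
have -> : rC c *: (1%:M + adjmx P *m rdiag_mx d *m P) =
          adjmx P *m rdiag_mx (\row_i (c * (1 + d 0 i))) *m P.
  by rewrite rdiag_shift -scalemxAr -scalemxAl mulmxDr mulmxDl mulmx1 P_unitary.
have trace1 : \sum_i c * (1 + d 0 i) = 1.
  rewrite -mulr_sumr big_split /= sum_d addr0 sumr_const card_ord.
  by rewrite mulVf // pnatr_eq0 -lt0n.
rewrite /density_matrix mxtrace_unitary_conj mxtrace_diag.
split=> [[/psd_unitary_rdiag d_ge0 _] i|d_ge0].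
  by have := d_ge0 i; rewrite mxE pmulr_rge0.
split; first by apply/psd_unitary_rdiag => i; rewrite mxE mulr_ge0 // ltW.
rewrite -[RHS]/(rC 1) -[in RHS]trace1 rCE rmorph_sum.
by apply: eq_bigr => i _; rewrite !mxE.
Qed.

End UnitaryConjugation.
End UnitaryDiagonal.

Section GellMann.
Variable R : realType.

Lemma vlambdaE (v : 'rV[R]_8) :
  let a k := v 0 (inord k) in let s := (Num.sqrt 3)^-1 : R in
  vlambda v = mx3
    (Complex (a 2%N + s * a 7%N) 0) (Complex (a 0%N) (- a 1%N)) (Complex (a 3%N) (- a 4%N))
    (Complex (a 0%N) (a 1%N)) (Complex (s * a 7%N - a 2%N) 0) (Complex (a 5%N) (- a 6%N))
    (Complex (a 3%N) (a 4%N)) (Complex (a 5%N) (a 6%N)) (Complex (-2 * (s * a 7%N)) 0).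
Proof.
move=> a s.
have -> : vlambda v = \sum_(i < 8) rC (v 0 (@inord 7 i)) *: @gell_mann R (@inord 7 i).
  by apply: eq_bigr => i _; rewrite inord_val.
rewrite -(big_mkord xpredT (fun i => rC (v 0 (@inord 7 i)) *: @gell_mann R (@inord 7 i))).
rewrite unlock /= /gell_mann !inordK //=.
apply/matrixP => i j; rewrite /mx3 !mxE.
by case: i => [[|[|[|//]]] ?]; case: j => [[|[|[|//]]] ?] /=;
  apply: complex_eq; rewrite /rC /iC /a /s ?complex_partsE; ring.
Qed.

Lemma vlambda_adj (v : 'rV[R]_8) : adjmx (vlambda v) = vlambda v.
Proof.
rewrite vlambdaE /=; apply/matrixP => i j; rewrite /mx3 !mxE.
by case: i => [[|[|[|//]]] ?]; case: j => [[|[|[|//]]] ?] /=;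
  apply: complex_eq; rewrite ?complex_partsE; ring.
Qed.

Lemma mxtrace_vlambda (v : 'rV[R]_8) : \tr (vlambda v) = 0.
Proof.
rewrite vlambdaE /= /mxtrace !big_ord_recr big_ord0 /= /mx3 !mxE /=.
by apply: complex_eq; rewrite ?complex_partsE; ring.
Qed.

Lemma sqnormE (v : 'rV[R]_8) : let a k := v 0 (inord k) in
  sqnorm v = a 0%N ^+ 2 + a 1%N ^+ 2 + a 2%N ^+ 2 + a 3%N ^+ 2
           + a 4%N ^+ 2 + a 5%N ^+ 2 + a 6%N ^+ 2 + a 7%N ^+ 2.
Proof.
move=> a.
have -> : sqnorm v = \sum_(i < 8) v 0 (@inord 7 i) ^+ 2.
  by apply: eq_bigr => i _; rewrite inord_val.
by rewrite -(big_mkord xpredT (fun i => v 0 (@inord 7 i) ^+ 2)) unlock /= /a; ring.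
Qed.

Lemma mxtrace_vlambda_sqr (v : 'rV[R]_8) :
  \tr (vlambda v *m vlambda v) = rC (2 * sqnorm v).
Proof.
have sqr_sqrt3 (x : R) : x ^+ 2 = 3 * ((Num.sqrt 3)^-1 * x) ^+ 2.
  by rewrite exprMn exprVn sqr_sqrtr ?ler0n // mulrA mulfV ?mul1r ?pnatr_eq0.
rewrite sqnormE vlambdaE /= /mxtrace !big_ord_recr big_ord0 /=.
rewrite !mxE !big_ord_recr !big_ord0 /= /mx3 !mxE /= (sqr_sqrt3 (v 0 (inord 7))).
move: ((Num.sqrt 3)^-1 * v 0 (inord 7)) => b.
by apply: complex_eq; rewrite /rC ?complex_partsE; ring.
Qed.

End GellMann.

Theorem mainTheorem17 (R : realType) (v : 'rV[R]_8) :
  density_matrix (rC (3%:R^-1 : R) *: (1%:M + vlambda v))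
  <-> (sqnorm v <= 3 /\ rC (sqnorm v) <= 1 + \det (vlambda v)).
Proof.
have [P P_unitary [d vlE]] := hermitian_unitary_rdiag (vlambda_adj v).
have sum_d : \sum_i d 0 i = 0.
  apply: rC_inj; rewrite -mxtrace_rdiag -(mxtrace_unitary_conj P_unitary) -vlE.
  exact: mxtrace_vlambda.
have sumsq_d : \sum_i d 0 i ^+ 2 = 2 * sqnorm v.
  apply: rC_inj; rewrite -mxtrace_rdiag_sqr -(mxtrace_unitary_conj P_unitary).
  by rewrite -mulmx_unitary_conj // -vlE mxtrace_vlambda_sqr.
have det_d : \det (vlambda v) = rC (\prod_i d 0 i).
  by rewrite vlE det_unitary_conj // det_rdiag.
rewrite det_d (_ : 1 + _ = rC (1 + \prod_i d 0 i)) ?lecR ?vlE; last first.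
  by rewrite !rCE rmorphD rmorph1.
exact: iff_trans (density_unitary_shift P_unitary _ sum_d)
                 (traceless3_shift_ge0 sum_d sumsq_d).
Qed.
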